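(* Let $T\ge2$, and let $\mathscr Q^{\mathrm{VC}}$ be the mixture probability assignment built from $g_1,\dots,g_{m_\epsilon}\in\mathcal G$. For every $x_{1:T}\in\mathcal X^T$, $y_{1:T}\in\{0,1\}^T$, $g^*\in\mathcal G$ and $\theta_0^*,\theta_1^*\in[0,1]$, $$\log\frac{p_{g^*,\theta_0^*,\theta_1^*}(y_{1:T}\mid x_{1:T})}{q(y_{1:T}\|x_{1:T})}\le\log m_\epsilon+2\log T+32\,\min_{i\in[m_\epsilon]}d_H\big(g^*(x_{1:T}),g_i(x_{1:T})\big)\log T,$$ where $g(x_{1:T})=(g(x_1),\dots,g(x_T))\in\{0,1\}^T$ and $d_H$ is Hamming distance.
   Context: $\mathcal G\subseteq\{\mathcal X\to\{0,1\}\}$ is a class of binary functions. The VC class $\mathcal F^{\mathrm{VC}}$ consists of the predictors indexed by $(g,\theta_0,\theta_1)\in\mathcal G\times[0,1]^2$ with $p_{g,\theta_0,\theta_1}(1\mid x)=\theta_{g(x)}$, $p_{g,\theta_0,\theta_1}(0\mid x)=1-\theta_{g(x)}$, and $p_{g,\theta_0,\theta_1}(y_{1:t}\mid x_{1:t})=\prod_{i\le t}p_{g,\theta_0,\theta_1}(y_i\mid x_i)$. Given $g_1,\dots,g_{m_\epsilon}\in\mathcal G$, the mixture assignment $\mathscr Q^{\mathrm{VC}}$ is defined by $q(y_{1:t}\|x_{1:t})=\frac1{m_\epsilon}\sum_{i=1}^{m_\epsilon}\int_0^1\int_0^1p_{g_i,\theta_0,\theta_1}(y_{1:t}\mid x_{1:t})\,d\theta_0\,d\theta_1$,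 with sequential predictions $q(1\mid x_{1:t},y_{1:t-1})=q(y_{1:t-1}1\|x_{1:t})/q(y_{1:t-1}\|x_{1:t-1})$, so that $q(y_{1:T}\|x_{1:T})=\prod_t q(y_t\mid x_{1:t},y_{1:t-1})$. Logarithms are natural. *)

From Stdlib Require Import Reals Lra Lia List.
From Coquelicot Require Import Coquelicot.
Open Scope R_scope.

(* Sequences x_{1:T}, y_{1:T} are represented by functions on indices 0..T-1. *)

(* p_{g,th0,th1}(y | x) with labels y in {0,1} encoded as bool (true = 1). *)
Definition theta_of {X : Type} (g : X -> bool) (th0 th1 : R) (x : X) : R :=
  if g x then th1 else th0.

Definition p1 {X : Type} (g : X -> bool) (th0 th1 : R) (x : X) (y : bool) : R :=
  if y then theta_of g th0 th1 x else 1 - theta_of g th0 th1 x.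

Fixpoint pseq {X : Type} (g : X -> bool) (th0 th1 : R)
    (T : nat) (x : nat -> X) (y : nat -> bool) : R :=
  match T with
  | O => 1
  | S k => pseq g th0 th1 k x y * p1 g th0 th1 (x k) (y k)
  end.

Fixpoint sumR (m : nat) (f : nat -> R) : R :=
  match m with
  | O => 0
  | S k => sumR k f + f k
  end.

Definition qVC {X : Type} (gs : nat -> (X -> bool)) (m : nat)
    (T : nat) (x : nat -> X) (y : nat -> bool) : R :=
  / INR m * sumR m (fun i =>
    RInt (fun th1 => RInt (fun th0 => pseq (gs i) th0 th1 T x y) 0 1) 0 1).

Definition hamming {X : Type} (g g' : X -> bool) (T : nat) (x : nat -> X) : nat :=
  length (filter (fun i => negb (Bool.eqb (g (x i)) (g' (x i)))) (seq 0 T)).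

(* min_{i < m} d i  (for m >= 1) *)
Definition min_idx (m : nat) (d : nat -> nat) : nat :=
  fold_right Nat.min (d 0%nat) (map d (seq 0 m)).

From Stdlib Require Import Reals List.
From Coquelicot Require Import Coquelicot.
From Stdlib Require Import Lra Lia Factorial.
Open Scope R_scope.

(* Integrating p_{g,th0,th1} over the uniform prior factors into two Beta
   integrals B(a, b) = a! b! / (a + b + 1)!, and since C(a + b, a) t^a (1 - t)^b
   <= 1 every likelihood p_{g,ph0,ph1} is at most T^2 times the Laplace mixture
   for g.  It remains to compare p_{g*,th0,th1} with p_{g_i,ph0,ph1} for the
   smoothed parameters ph = (1 - e) th + e / 2, e = 1 / (2T): each position
   where g* and g_i agree costs a factor 1 - e, each disagreement a factor
   e / 2 = 1 / (4T), and together these cost at most T^(32 d). *)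

Definition beta_kernel (a b : nat) (t : R) : R := t ^ a * (1 - t) ^ b.

Definition beta_integral (a b : nat) : R := RInt (beta_kernel a b) 0 1.

Lemma ex_RInt_beta_kernel a b : ex_RInt (beta_kernel a b) 0 1.
Proof.
  apply (ex_RInt_continuous (V := R_CompleteNormedModule)); intros t _.
  apply (@ex_derive_continuous R_AbsRing R_NormedModule).
  unfold beta_kernel; auto_derive; auto.
Qed.

Lemma beta_integral_0_r a : beta_integral a 0 = / INR (S a).
Proof.
  unfold beta_integral.
  rewrite (RInt_ext _ (fun t => t ^ a)) by (intros; unfold beta_kernel; simpl; ring).
  rewrite (is_RInt_unique _ _ _ _ (is_RInt_pow 0 1 a)), pow1, pow_i by lia.
  field; apply not_0_INR; lia.
Qed.

Lemma beta_integral_split a b :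
  beta_integral a b = beta_integral (S a) b + beta_integral a (S b).
Proof.
  unfold beta_integral.
  rewrite <- (RInt_plus (V := R_CompleteNormedModule)) by apply ex_RInt_beta_kernel.
  apply RInt_ext; intros; unfold beta_kernel; simpl; change (plus ?u ?v) with (u + v); ring.
Qed.

Lemma beta_integral_fact b : forall a,
  beta_integral a b = INR (fact a) * INR (fact b) / INR (fact (S (a + b))).
Proof.
  assert (Hfact : forall n, INR (fact n) <> 0) by (intros; apply not_0_INR, fact_neq_0).
  induction b as [|b IH]; intros a.
  - rewrite beta_integral_0_r, Nat.add_0_r, fact_simpl, mult_INR; simpl (INR (fact 0)).
    field; split; [apply Hfact | apply not_0_INR; lia].
  - assert (Hsplit := beta_integral_split a b); rewrite !IH in Hsplit.
    replace (beta_integral a (S b)) with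
      (INR (fact a) * INR (fact b) / INR (fact (S (a + b)))
       - INR (fact (S a)) * INR (fact b) / INR (fact (S (S a + b)))) by lra.
    rewrite Nat.add_succ_r; simpl (S a + b)%nat.
    rewrite !(fact_simpl (S (a + b))), !(fact_simpl a), !(fact_simpl b).
    rewrite !mult_INR, !S_INR, plus_INR.
    pose proof (pos_INR a); pose proof (pos_INR b).
    field; repeat split; try apply Hfact; lra.
Qed.

Lemma beta_integral_gt0 a b : 0 < beta_integral a b.
Proof.
  rewrite beta_integral_fact; apply Rdiv_lt_0_compat;
    [apply Rmult_lt_0_compat|]; apply lt_0_INR, lt_O_fact.
Qed.

Lemma beta_integral_binomial a b :
  INR (S (a + b)) * Binomial.C (a + b) a * beta_integral a b = 1.
Proof.
  rewrite beta_integral_fact; unfold Binomial.C.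
  replace (a + b - a)%nat with b by lia.
  rewrite fact_simpl, mult_INR.
  assert (Hfact : forall n, INR (fact n) <> 0) by (intros; apply not_0_INR, fact_neq_0).
  field; repeat split; try apply Hfact; apply not_0_INR; lia.
Qed.

Lemma sum_f_R0_ge_term (f : nat -> R) n k :
  (forall i, (i <= n)%nat -> 0 <= f i) -> (k <= n)%nat -> f k <= sum_f_R0 f n.
Proof.
  revert k; induction n as [|n IH]; intros k Hf Hk; simpl.
  - replace k with 0%nat by lia; lra.
  - assert (IHn : forall i, (i <= n)%nat -> f i <= sum_f_R0 f n)
      by (intros; apply IH; [intros; apply Hf|]; lia).
    assert (0 <= f 0%nat) by (apply Hf; lia).
    assert (0 <= f (S n)) by (apply Hf; lia).
    destruct (Nat.eq_dec k (S n)) as [->|Hne].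
    + assert (f 0%nat <= sum_f_R0 f n) by (apply IHn; lia); lra.
    + assert (f k <= sum_f_R0 f n) by (apply IHn; lia); lra.
Qed.

Lemma binomial_term_le_1 n k p : 0 <= p <= 1 -> (k <= n)%nat ->
  Binomial.C n k * p ^ k * (1 - p) ^ (n - k) <= 1.
Proof.
  intros Hp Hk.
  assert (Hsum := binomial p (1 - p) n).
  replace (p + (1 - p)) with 1 in Hsum by ring; rewrite pow1 in Hsum.
  rewrite Hsum at 2;
    apply (sum_f_R0_ge_term (fun i => Binomial.C n i * p ^ i * (1 - p) ^ (n - i)));
    [intros i Hi | exact Hk].
  assert (0 <= Binomial.C n i).
  { unfold Binomial.C; apply Rle_mult_inv_pos; [apply pos_INR|].
    rewrite <- mult_INR; apply lt_0_INR, Nat.mul_pos_pos; apply lt_O_fact. }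
  apply Rmult_le_pos; [apply Rmult_le_pos|]; auto; apply pow_le; lra.
Qed.

Lemma beta_kernel_le a b p : 0 <= p <= 1 ->
  beta_kernel a b p <= INR (S (a + b)) * beta_integral a b.
Proof.
  intros Hp.
  assert (Hterm := binomial_term_le_1 (a + b) a p Hp ltac:(lia)).
  replace (a + b - a)%nat with b in Hterm by lia.
  assert (Hone := beta_integral_binomial a b).
  assert (0 < INR (S (a + b)) * beta_integral a b)
    by (apply Rmult_lt_0_compat; [apply lt_0_INR; lia | apply beta_integral_gt0]).
  unfold beta_kernel.
  replace (p ^ a * (1 - p) ^ b) with
    ((Binomial.C (a + b) a * p ^ a * (1 - p) ^ b) * (INR (S (a + b)) * beta_integral a b))
    by (rewrite <- Rmult_1_r; rewrite <- Hone; ring).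
  rewrite <- (Rmult_1_l (INR (S (a + b)) * beta_integral a b)) at 2.
  apply Rmult_le_compat_r; lra.
Qed.

Fixpoint label_count {X : Type} (g : X -> bool) (v yb : bool)
    (T : nat) (x : nat -> X) (y : nat -> bool) : nat :=
  match T with
  | O => O
  | S k => (label_count g v yb k x y
            + if andb (Bool.eqb (g (x k)) v) (Bool.eqb (y k) yb) then 1 else 0)%nat
  end.

Section LaplaceMixture.

Context {X : Type}.
Variables (g : X -> bool) (x : nat -> X) (y : nat -> bool).

Local Notation n01 T := (label_count g false true T x y).
Local Notation n00 T := (label_count g false false T x y).
Local Notation n11 T := (label_count g true true T x y).
Local Notation n10 T := (label_count g true false T x y).

Lemma pseq_beta_kernel T th0 th1 :
  pseq g th0 th1 T x y
  = beta_kernel (n01 T) (n00 T) th0 * beta_kernel (n11 T) (n10 T) th1.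
Proof.
  unfold beta_kernel; induction T as [|k IH]; simpl; [ring|].
  rewrite IH; unfold p1, theta_of.
  destruct (g (x k)), (y k); simpl; rewrite ?Nat.add_0_r, ?Nat.add_1_r; simpl; ring.
Qed.

Lemma label_count_total T : (n01 T + n00 T + (n11 T + n10 T))%nat = T.
Proof.
  induction T as [|k IH]; simpl; [lia|].
  destruct (g (x k)), (y k); simpl; lia.
Qed.

Definition laplace_mixture (T : nat) : R :=
  RInt (fun th1 => RInt (fun th0 => pseq g th0 th1 T x y) 0 1) 0 1.

Lemma laplace_mixture_beta T :
  laplace_mixture T = beta_integral (n01 T) (n00 T) * beta_integral (n11 T) (n10 T).
Proof.
  unfold laplace_mixture.
  rewrite (RInt_ext _ (fun th1 =>
    scal (beta_integral (n01 T) (n00 T)) (beta_kernel (n11 T) (n10 T) th1))).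
  - rewrite (RInt_scal (V := R_CompleteNormedModule)) by apply ex_RInt_beta_kernel.
    reflexivity.
  - intros th1 _.
    rewrite (RInt_ext _ (fun th0 =>
      scal (beta_kernel (n11 T) (n10 T) th1) (beta_kernel (n01 T) (n00 T) th0)))
      by (intros; rewrite pseq_beta_kernel; apply Rmult_comm).
    rewrite (RInt_scal (V := R_CompleteNormedModule)) by apply ex_RInt_beta_kernel.
    apply Rmult_comm.
Qed.

Lemma laplace_mixture_gt0 T : 0 < laplace_mixture T.
Proof.
  rewrite laplace_mixture_beta; apply Rmult_lt_0_compat; apply beta_integral_gt0.
Qed.

Lemma pseq_le_laplace_mixture T ph0 ph1 : (2 <= T)%nat ->
  0 <= ph0 <= 1 -> 0 <= ph1 <= 1 ->
  pseq g ph0 ph1 T x y <= INR T ^ 2 * laplace_mixture T.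
Proof.
  intros HT Hph0 Hph1.
  rewrite pseq_beta_kernel, laplace_mixture_beta.
  assert (Hcounts : (S (n01 T + n00 T) * S (n11 T + n10 T) <= T * T)%nat)
    by (pose proof (label_count_total T); nia).
  apply le_INR in Hcounts; rewrite !mult_INR in Hcounts.
  pose proof (beta_integral_gt0 (n01 T) (n00 T)).
  pose proof (beta_integral_gt0 (n11 T) (n10 T)).
  pose proof (pos_INR (S (n01 T + n00 T))); pose proof (pos_INR (S (n11 T + n10 T))).
  eapply Rle_trans.
  { apply Rmult_le_compat.
    - unfold beta_kernel; apply Rmult_le_pos; apply pow_le; lra.
    - unfold beta_kernel; apply Rmult_le_pos; apply pow_le; lra.
    - apply beta_kernel_le; exact Hph0.
    - apply beta_kernel_le; exact Hph1. }
  replace (INR T ^ 2) with (INR T * INR T) by ring.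
  replace (INR (S (n01 T + n00 T)) * beta_integral (n01 T) (n00 T)
           * (INR (S (n11 T + n10 T)) * beta_integral (n11 T) (n10 T)))
    with ((INR (S (n01 T + n00 T)) * INR (S (n11 T + n10 T)))
          * (beta_integral (n01 T) (n00 T) * beta_integral (n11 T) (n10 T))) by ring.
  apply Rmult_le_compat_r; [nra | exact Hcounts].
Qed.

End LaplaceMixture.

Lemma p1_nonneg {X : Type} (g : X -> bool) th0 th1 z yb :
  0 <= th0 <= 1 -> 0 <= th1 <= 1 -> 0 <= p1 g th0 th1 z yb.
Proof. intros; unfold p1, theta_of; destruct (g z), yb; lra. Qed.

Lemma pseq_nonneg {X : Type} (g : X -> bool) th0 th1 T x y :
  0 <= th0 <= 1 -> 0 <= th1 <= 1 -> 0 <= pseq g th0 th1 T x y.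
Proof.
  intros; induction T; simpl; [lra|].
  apply Rmult_le_pos; auto; apply p1_nonneg; auto.
Qed.

Lemma hamming_S {X : Type} (g g' : X -> bool) T x :
  hamming g g' (S T) x =
  (hamming g g' T x + if negb (Bool.eqb (g (x T)) (g' (x T))) then 1 else 0)%nat.
Proof.
  unfold hamming; rewrite seq_S, filter_app, length_app; simpl.
  destruct (negb (Bool.eqb (g (x T)) (g' (x T)))); reflexivity.
Qed.

Definition smooth (e th : R) : R := (1 - e) * th + e / 2.

Lemma smooth_in_01 e th : 0 <= e <= 1 -> 0 <= th <= 1 -> 0 <= smooth e th <= 1.
Proof. intros; unfold smooth; nra. Qed.

Lemma p1_smooth_ge {X : Type} (g g' : X -> bool) e th0 th1 z yb :
  0 <= e <= 1 -> 0 <= th0 <= 1 -> 0 <= th1 <= 1 ->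
  (if Bool.eqb (g z) (g' z) then 1 - e else e / 2) * p1 g th0 th1 z yb
  <= p1 g' (smooth e th0) (smooth e th1) z yb.
Proof.
  intros; unfold p1, theta_of, smooth.
  destruct (g z), (g' z), yb; simpl; nra.
Qed.

Lemma pseq_smooth_ge {X : Type} (g g' : X -> bool) e th0 th1 T x y :
  0 <= e <= 1 -> 0 <= th0 <= 1 -> 0 <= th1 <= 1 ->
  (1 - e) ^ T * (e / 2) ^ hamming g g' T x * pseq g th0 th1 T x y
  <= pseq g' (smooth e th0) (smooth e th1) T x y.
Proof.
  intros He Hth0 Hth1; induction T as [|k IH].
  - unfold hamming; simpl; lra.
  - set (c := if Bool.eqb (g (x k)) (g' (x k)) then 1 - e else e / 2).
    set (L := (1 - e) ^ k * (e / 2) ^ hamming g g' k x * pseq g th0 th1 k x y).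
    assert (HL : 0 <= L).
    { unfold L; pose proof (pseq_nonneg g th0 th1 k x y Hth0 Hth1).
      apply Rmult_le_pos; [apply Rmult_le_pos|]; auto; apply pow_le; lra. }
    pose proof (p1_nonneg g th0 th1 (x k) (y k) Hth0 Hth1).
    assert (Hstep : (1 - e) ^ S k * (e / 2) ^ hamming g g' (S k) x * pseq g th0 th1 (S k) x y
                    <= L * (c * p1 g th0 th1 (x k) (y k))).
    { rewrite hamming_S; unfold c; simpl pseq; simpl pow.
      destruct (Bool.eqb (g (x k)) (g' (x k))); simpl negb.
      - rewrite Nat.add_0_r; apply Req_le; unfold L; ring.
      - rewrite pow_add; simpl pow.
        assert (0 <= L * (e / 2 * p1 g th0 th1 (x k) (y k))) by
          (apply Rmult_le_pos; [|apply Rmult_le_pos]; lra).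
        replace ((1 - e) * (1 - e) ^ k * ((e / 2) ^ hamming g g' k x * (e / 2 * 1))
                 * (pseq g th0 th1 k x y * p1 g th0 th1 (x k) (y k)))
          with ((1 - e) * (L * (e / 2 * p1 g th0 th1 (x k) (y k)))) by (unfold L; ring).
        nra. }
    eapply Rle_trans; [exact Hstep|]; simpl pseq.
    apply Rmult_le_compat; auto.
    + apply Rmult_le_pos; auto; unfold c; destruct (Bool.eqb _ _); lra.
    + apply p1_smooth_ge; auto.
Qed.

Lemma one_sub_pow_ge e n : 0 <= e <= 1 -> 1 - INR n * e <= (1 - e) ^ n.
Proof.
  intros He; induction n as [|n IH]; [simpl; lra|].
  rewrite S_INR; simpl pow; pose proof (pos_INR n).
  assert ((1 - e) * (1 - INR n * e) <= (1 - e) * (1 - e) ^ n)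
    by (apply Rmult_le_compat_l; lra).
  nra.
Qed.

Lemma two_mul_pow_le T d : (2 <= T)%nat -> (1 <= d)%nat ->
  (2 * (4 * T) ^ d <= T ^ (32 * d))%nat.
Proof.
  intros HT Hd.
  assert (H4T : ((4 * T) ^ d <= T ^ (3 * d))%nat)
    by (rewrite Nat.pow_mul_r; apply Nat.pow_le_mono_l; simpl; nia).
  assert (H2 : (2 <= T ^ d)%nat)
    by (eapply Nat.le_trans; [exact HT|];
        rewrite <- (Nat.pow_1_r T) at 1; apply Nat.pow_le_mono_r; lia).
  apply Nat.le_trans with (T ^ d * T ^ (3 * d))%nat; [nia|].
  rewrite <- Nat.pow_add_r; apply Nat.pow_le_mono_r; lia.
Qed.

(* With [e = 1 / (2T)] the agreeing positions cost at most a factor 2 in total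
   (Bernoulli) and each disagreeing one a factor [4T <= T^3]. *)
Lemma smoothing_cost T d : (2 <= T)%nat ->
  exists e, 0 <= e <= 1 /\ 1 <= (1 - e) ^ T * (e / 2) ^ d * INR T ^ (32 * d).
Proof.
  intros HT; assert (HT' : 2 <= INR T) by (apply (le_INR 2); lia).
  destruct (Nat.eq_dec d 0) as [->|Hd].
  - exists 0; split; [lra|]; rewrite Nat.mul_0_r; simpl; rewrite Rminus_0_r, pow1; lra.
  - exists (/ (2 * INR T)).
    assert (He : 0 <= / (2 * INR T) <= 1 / 4).
    { split; [apply Rlt_le, Rinv_0_lt_compat; lra|].
      unfold Rdiv; rewrite Rmult_1_l; apply Rinv_le_contravar; lra. }
    split; [lra|].
    assert (Hbern := one_sub_pow_ge (/ (2 * INR T)) T ltac:(lra)).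
    replace (INR T * / (2 * INR T)) with (/ 2) in Hbern by (field; lra).
    assert (Hnat := two_mul_pow_le T d HT ltac:(lia)).
    apply le_INR in Hnat; rewrite mult_INR, !pow_INR, mult_INR in Hnat.
    replace (INR 2) with 2 in Hnat by (simpl; lra).
    replace (INR 4) with 4 in Hnat by (simpl; lra).
    replace (/ (2 * INR T) / 2) with (/ (4 * INR T)) by (field; lra).
    rewrite pow_inv.
    assert (0 < (4 * INR T) ^ d) by (apply pow_lt; lra).
    replace ((1 - / (2 * INR T)) ^ T * / (4 * INR T) ^ d * INR T ^ (32 * d))
      with ((1 - / (2 * INR T)) ^ T * (INR T ^ (32 * d) / (4 * INR T) ^ d)) by (field; lra).
    assert (2 <= INR T ^ (32 * d) / (4 * INR T) ^ d).
    { apply Rmult_le_reg_r with ((4 * INR T) ^ d); auto.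
      unfold Rdiv; rewrite Rmult_assoc, Rinv_l by lra; lra. }
    nra.
Qed.

Lemma pseq_le_laplace_mixture_hamming {X : Type} (g g' : X -> bool) th0 th1 T x y :
  (2 <= T)%nat -> 0 <= th0 <= 1 -> 0 <= th1 <= 1 ->
  pseq g th0 th1 T x y
  <= INR T ^ (2 + 32 * hamming g g' T x) * laplace_mixture g' x y T.
Proof.
  intros HT Hth0 Hth1.
  destruct (smoothing_cost T (hamming g g' T x) HT) as [e [He Hcost]].
  set (c := (1 - e) ^ T * (e / 2) ^ hamming g g' T x) in *.
  set (K := INR T ^ (32 * hamming g g' T x)) in *.
  assert (HK : 0 <= K) by (apply pow_le, pos_INR).
  pose proof (pseq_nonneg g th0 th1 T x y Hth0 Hth1).
  assert (Hsmooth := pseq_smooth_ge g g' e th0 th1 T x y He Hth0 Hth1); fold c in Hsmooth.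
  assert (Hlap := pseq_le_laplace_mixture g' x y T (smooth e th0) (smooth e th1) HT
                    (smooth_in_01 e th0 He Hth0) (smooth_in_01 e th1 He Hth1)).
  rewrite pow_add; fold K.
  apply Rle_trans with (K * (c * pseq g th0 th1 T x y)); [nra|].
  replace (INR T ^ 2 * K * laplace_mixture g' x y T)
    with (K * (INR T ^ 2 * laplace_mixture g' x y T)) by ring.
  apply Rmult_le_compat_l; lra.
Qed.

Lemma sumR_ge_term (f : nat -> R) m i :
  (forall j, (j < m)%nat -> 0 <= f j) -> (i < m)%nat -> f i <= sumR m f.
Proof.
  revert i; induction m as [|m IH]; intros i Hf Hi; [lia|]; simpl.
  assert (IHm : forall j, (j < m)%nat -> f j <= sumR m f)
    by (intros; apply IH; [intros; apply Hf|]; lia).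
  assert (0 <= f m) by (apply Hf; lia).
  destruct (Nat.eq_dec i m) as [->|Hne].
  - destruct m as [|m]; [simpl; lra|].
    assert (f 0%nat <= sumR (S m) f) by (apply IHm; lia).
    assert (0 <= f 0%nat) by (apply Hf; lia); lra.
  - assert (f i <= sumR m f) by (apply IHm; lia); lra.
Qed.

Lemma laplace_mixture_le_qVC {X : Type} (gs : nat -> (X -> bool)) m T x y i :
  (i < m)%nat -> laplace_mixture (gs i) x y T <= INR m * qVC gs m T x y.
Proof.
  intros Hi; unfold qVC.
  rewrite <- Rmult_assoc, Rinv_r, Rmult_1_l by (apply not_0_INR; lia).
  apply (sumR_ge_term (fun j => laplace_mixture (gs j) x y T)); [|exact Hi].
  intros j _; apply Rlt_le, laplace_mixture_gt0.
Qed.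

Lemma min_idx_attained (m : nat) (d : nat -> nat) : (0 < m)%nat ->
  exists i, (i < m)%nat /\ min_idx m d = d i.
Proof.
  intros Hm; unfold min_idx.
  assert (Hfold : forall l, fold_right Nat.min (d 0%nat) (map d l) = d 0%nat \/
            exists i, In i l /\ fold_right Nat.min (d 0%nat) (map d l) = d i).
  { induction l as [|j l IH]; simpl; auto.
    destruct (Nat.min_spec (d j) (fold_right Nat.min (d 0%nat) (map d l)))
      as [[_ ->]|[_ ->]]; eauto.
    destruct IH as [IH|[i [Hi IH]]]; eauto. }
  destruct (Hfold (seq 0 m)) as [E|[i [Hi E]]]; [exists 0%nat; auto|].
  exists i; split; auto; apply in_seq in Hi; lia.
Qed.

Lemma ln_div_le p q M : 0 <= p -> 0 < q -> 1 <= M -> p <= M * q -> ln (p / q) <= ln M.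
Proof.
  intros Hp Hq HM HpM.
  assert (HlnM : 0 <= ln M) by (rewrite <- ln_1; apply ln_le; lra).
  destruct (Rle_lt_or_eq_dec 0 p Hp) as [Hp'|<-].
  - apply ln_le; [apply Rdiv_lt_0_compat; auto|].
    apply Rmult_le_reg_r with q; auto.
    unfold Rdiv; rewrite Rmult_assoc, Rinv_l; lra.
  - (* Stdlib's [ln] is [0] outside [(0, +oo)]. *)
    replace (ln (0 / q)) with 0; [exact HlnM|].
    unfold Rdiv; rewrite Rmult_0_l; unfold ln.
    destruct (Rlt_dec 0 0) as [Habs|]; [destruct (Rlt_irrefl 0 Habs) | reflexivity].
Qed.

Theorem mainTheorem10 (X : Type) (G : (X -> bool) -> Prop)
  (m : nat) (gs : nat -> (X -> bool))
  (Hm : (0 < m)%nat) (HgsG : forall i, (i < m)%nat -> G (gs i))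
  (T : nat) (HT : (2 <= T)%nat)
  (x : nat -> X) (y : nat -> bool)
  (gstar : X -> bool) (Hgstar : G gstar)
  (th0 th1 : R) (Hth0 : 0 <= th0 <= 1) (Hth1 : 0 <= th1 <= 1) :
  ln (pseq gstar th0 th1 T x y / qVC gs m T x y)
  <= ln (INR m) + 2 * ln (INR T)
     + 32 * INR (min_idx m (fun i => hamming gstar (gs i) T x)) * ln (INR T).
Proof.
  destruct (min_idx_attained m (fun i => hamming gstar (gs i) T x) Hm) as [i [Hi ->]].
  set (d := hamming gstar (gs i) T x).
  assert (Hm' : 1 <= INR m) by (apply (le_INR 1); lia).
  assert (HT' : 1 <= INR T) by (apply (le_INR 1); lia).
  assert (Hmix := laplace_mixture_le_qVC gs m T x y i Hi).
  assert (Hmix_pos := laplace_mixture_gt0 (gs i) x y T).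
  assert (HTd : 1 <= INR T ^ (2 + 32 * d)) by (apply pow_R1_Rle; lra).
  replace (ln (INR m) + 2 * ln (INR T) + 32 * INR d * ln (INR T))
    with (ln (INR m * INR T ^ (2 + 32 * d)))
    by (rewrite ln_mult, ln_pow, plus_INR, mult_INR by lra;
        simpl (INR 2); simpl (INR 32); ring).
  apply ln_div_le.
  - apply pseq_nonneg; assumption.
  - apply Rmult_lt_reg_l with (INR m); lra.
  - rewrite <- (Rmult_1_l 1); apply Rmult_le_compat; lra.
  - eapply Rle_trans;
      [apply (pseq_le_laplace_mixture_hamming gstar (gs i)); assumption|]; fold d.
    replace (INR m * INR T ^ (2 + 32 * d) * qVC gs m T x y)
      with (INR T ^ (2 + 32 * d) * (INR m * qVC gs m T x y)) by ring.
    apply Rmult_le_compat_l; lra.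
Qed.
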